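(* Let $\mathcal{M}$ be a class of $\mathcal{L}$-structures and $\Sigma$ a class of formulas of $\mathcal{L}_A$ containing all atomic formulas and closed under subformulas. For every condition $p$ of $\mathcal{P}(\mathcal{M},\Sigma)$ and all sentences in $\Sigma(C)$ of the indicated forms: $H^w_p(\varphi)=\sup_{q\le p}H^w_q(\varphi)=\sup_{q\le p}\inf_{q'\le q}H^w_{q'}(\varphi)$; $H^w_p(\neg\varphi)=1-\inf_{q\le p}H^w_q(\varphi)$; $H^w_p(\tfrac12\varphi)=\tfrac12H^w_p(\varphi)$; $H^w_p(\varphi\dotplus\psi)=\sup_{q\le p}\inf_{q'\le q}\min\big(H^w_{q'}(\varphi)+H^w_{q'}(\psi),1\big)$; $H^w_p(\bigwedge\Phi)=\sup_{q\le p}\inf_{q'\le q}\inf_{\varphi\in\Phi}H^w_{q'}(\varphi)$; $H^w_p(\inf_x\varphi(x))=\sup_{q\le p}\inf_{q'\le q}\inf_{c\in C}H^w_{q'}(\varphi(c))$.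
   Context: $\mathcal{L}$ is a countable continuous signature; formulas of $\mathcal{L}_{\omega_1,\omega}$ are built from atomic formulas using $\neg$ ($1-x$), $\tfrac12$, $\dotplus$ ($\min(x+y,1)$), countable conjunctions $\bigwedge$ (infimum) and $\inf_x$, interpreted in structures with values in $[0,1]$. $\mathcal{L}_A$ is a countable fragment. $C=\{c_i:i<\omega\}$ are new constants. $\mathcal{M}(C)$ is the class of structures $(M,a_c)_{c\in C_0}$ with $M\in\mathcal{M}$, $C_0\subseteq C$ finite. $\Sigma(C)$ is the set of formulas obtained from formulas of $\Sigma$ by replacing finitely many free variables by constants from $C$. $\mathcal{P}(\mathcal{M},\Sigma)$ is the set of finite sets $\{\phi_1<r_1,\dots,\phi_n<r_n\}$ with $\phi_i\in\Sigma(C)$ sentences such that some $M\in\mathcal{M}(C)$ satisfies $\phi_i^M<r_i$ for all $i$, ordered by reverse inclusion. For a condition $p$ and a sentence $\varphi\in\Sigma(C)$, $H_p(\varphi)=\min\{r\le1:(\varphi<r)\in p\}$ if nonempty, else $1$; $H^w_p(\varphi)=\sup_{q\le p}\inf_{q'\le q}H_{q'}(\varphi)$. *)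

From HB Require Import structures.
From mathcomp Require Import all_boot all_order all_algebra.
From mathcomp Require Import boolp classical_sets reals.
From Stdlib Require List.
Set Implicit Arguments. Unset Strict Implicit. Unset Printing Implicit Defensive.
Import Order.TTheory GRing.Theory Num.Theory.
Local Open Scope classical_set_scope.
Local Open Scope ring_scope.

Record signature (R : realType) := Signature {
  fsym : countType;
  psym : countType;
  farity : fsym -> nat;
  parity : psym -> nat;
  fmod : fsym -> R -> R;                 (* moduli of uniform continuity *)
  pmod : psym -> R -> R;
  fmod_pos : forall f e, 0 < e -> 0 < fmod f e;
  pmod_pos : forall P e, 0 < e -> 0 < pmod P e }.

Inductive term (R : realType) (L : signature R) : Type :=
| TVar : nat -> term L
| TConst : nat -> term L
| TApp (f : fsym L) : ('I_(farity f) -> term L) -> term L.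

Inductive formula (R : realType) (L : signature R) : Type :=
| FDist : term L -> term L -> formula L
| FPred (P : psym L) : ('I_(parity P) -> term L) -> formula L
| FNeg : formula L -> formula L
| FHalf : formula L -> formula L
| FPlus : formula L -> formula L -> formula L
| FAnd : (nat -> formula L) -> formula L
| FInf : nat -> formula L -> formula L.

Arguments TVar {R L}. Arguments TConst {R L}.
Arguments FNeg {R L}. Arguments FHalf {R L}. Arguments FPlus {R L}.
Arguments FAnd {R L}. Arguments FInf {R L}. Arguments FDist {R L}.
Arguments FPred {R L} P _. Arguments TApp {R L} f _.

Fixpoint tfv R (L : signature R) (t : term L) (x : nat) : Prop :=
  match t with
  | TVar n => n = x
  | TConst _ => False
  | TApp f ts => exists i, tfv (ts i) x
  end.

Fixpoint ffv R (L : signature R) (phi : formula L) (x : nat) : Prop :=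
  match phi with
  | FDist t1 t2 => tfv t1 x \/ tfv t2 x
  | FPred P ts => exists i, tfv (ts i) x
  | FNeg p => ffv p x
  | FHalf p => ffv p x
  | FPlus p q => ffv p x \/ ffv q x
  | FAnd Ph => exists n, ffv (Ph n) x
  | FInf y p => x <> y /\ ffv p x
  end.

Fixpoint tconst R (L : signature R) (t : term L) (c : nat) : Prop :=
  match t with
  | TVar _ => False
  | TConst d => d = c
  | TApp f ts => exists i, tconst (ts i) c
  end.

Fixpoint fconst R (L : signature R) (phi : formula L) (c : nat) : Prop :=
  match phi with
  | FDist t1 t2 => tconst t1 c \/ tconst t2 c
  | FPred P ts => exists i, tconst (ts i) c
  | FNeg p => fconst p c
  | FHalf p => fconst p c
  | FPlus p q => fconst p c \/ fconst q c
  | FAnd Ph => exists n, fconst (Ph n) c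
  | FInf _ p => fconst p c
  end.

Definition sentence R (L : signature R) (phi : formula L) := forall x, ~ ffv phi x.

Definition Lformula R (L : signature R) (phi : formula L) :=
  (forall c, ~ fconst phi c) /\ exists N, forall x, ffv phi x -> (x < N)%N.

Definition Cfree_term R (L : signature R) (t : term L) := forall c, ~ tconst t c.

Definition atomicL R (L : signature R) (phi : formula L) :=
  (exists t1 t2, phi = FDist t1 t2 /\ Cfree_term t1 /\ Cfree_term t2) \/
  (exists P ts, phi = FPred P ts /\ forall i, Cfree_term (ts i)).

Definition imm_sub R (L : signature R) (psi phi : formula L) : Prop :=
  match phi with
  | FNeg p => psi = p
  | FHalf p => psi = p
  | FPlus p q => psi = p \/ psi = q
  | FAnd Ph => exists n, psi = Ph n
  | FInf _ p => psi = p
  | _ => False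
  end.

Definition subformula_closed R (L : signature R) (S : set (formula L)) :=
  forall phi psi, S phi -> imm_sub psi phi -> S psi.

(* countable fragment L_A of L_{omega1,omega} *)
Definition is_fragment R (L : signature R) (A : set (formula L)) :=
  [/\ exists enc : formula L -> nat,
        forall p q, A p -> A q -> enc p = enc q -> p = q,
      forall p, A p -> Lformula p,
      forall p, atomicL p -> A p,
      subformula_closed A &
      [/\ forall p, A p -> A (FNeg p),
          forall p, A p -> A (FHalf p),
          forall p q, A p -> A q -> A (FPlus p q),
          forall p q, A p -> A q -> A (FAnd (fun n => if n == 0%N then p else q)) &
          forall x p, A p -> A (FInf x p)]].

Fixpoint tsubst R (L : signature R) (x c : nat) (t : term L) : term L :=
  match t with
  | TVar n => if n == x then TConst c else TVar n
  | TConst d => TConst d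
  | TApp f ts => TApp f (fun i => tsubst x c (ts i))
  end.

Fixpoint fsubst R (L : signature R) (x c : nat) (phi : formula L) : formula L :=
  match phi with
  | FDist t1 t2 => FDist (tsubst x c t1) (tsubst x c t2)
  | FPred P ts => FPred P (fun i => tsubst x c (ts i))
  | FNeg p => FNeg (fsubst x c p)
  | FHalf p => FHalf (fsubst x c p)
  | FPlus p q => FPlus (fsubst x c p) (fsubst x c q)
  | FAnd Ph => FAnd (fun n => fsubst x c (Ph n))
  | FInf y p => if y == x then FInf y p else FInf y (fsubst x c p)
  end.

Definition SigmaC R (L : signature R) (S : set (formula L)) (psi : formula L) :=
  exists (phi : formula L) (s : seq (nat * nat)),
    S phi /\ psi = foldr (fun xc p => fsubst xc.1 xc.2 p) phi s.

Unset Implicit Arguments.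
Record structure (R : realType) (L : signature R) := Structure {
  carrier :> Type;
  inhab : carrier;
  dist : carrier -> carrier -> R;
  funI : forall f : fsym L, ('I_(farity f) -> carrier) -> carrier;
  predI : forall P : psym L, ('I_(parity P) -> carrier) -> R;
  dist_range : forall x y, 0 <= dist x y <= 1;
  dist_sep : forall x y, dist x y = 0 <-> x = y;
  dist_sym : forall x y, dist x y = dist y x;
  dist_tri : forall x y z, dist x z <= dist x y + dist y z;
  dist_complete : forall u : nat -> carrier,
    (forall e, 0 < e -> exists N, forall m n, (N <= m)%N -> (N <= n)%N -> dist (u m) (u n) < e) ->
    exists l, forall e, 0 < e -> exists N, forall n, (N <= n)%N -> dist (u n) l < e;
  pred_range : forall P xs, 0 <= predI P xs <= 1;
  fun_ucont : forall f e xs ys, 0 < e ->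
    (forall i, dist (xs i) (ys i) < fmod f e) -> dist (funI f xs) (funI f ys) <= e;
  pred_ucont : forall P e xs ys, 0 < e ->
    (forall i, dist (xs i) (ys i) < pmod P e) -> `|predI P xs - predI P ys| <= e }.
Arguments funI {R L} s f _. Arguments predI {R L} s P _. Arguments dist {R L} s _ _.
Arguments inhab {R L} s. Arguments structure {R} L.
Set Implicit Arguments.

Fixpoint teval R (L : signature R) (M : structure L) (a env : nat -> M) (t : term L) : M :=
  match t with
  | TVar n => env n
  | TConst c => a c
  | TApp f ts => funI M f (fun i => teval a env (ts i))
  end.

Definition upd (T : Type) (env : nat -> T) (x : nat) (m : T) : nat -> T :=
  fun y => if y == x then m else env y.

Fixpoint feval R (L : signature R) (M : structure L) (a env : nat -> M) (phi : formula L) : R :=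
  match phi with
  | FDist t1 t2 => dist M (teval a env t1) (teval a env t2)
  | FPred P ts => predI M P (fun i => teval a env (ts i))
  | FNeg p => 1 - feval a env p
  | FHalf p => feval a env p / 2
  | FPlus p q => Num.min (feval a env p + feval a env q) 1
  | FAnd Ph => inf (range (fun n => feval a env (Ph n)))
  | FInf x p => inf (range (fun m : M => feval a (upd env x m) p))
  end.

(* value of a sentence (independent of the variable assignment) *)
Definition sval R (L : signature R) (M : structure L) (a : nat -> M) (phi : formula L) : R :=
  feval a (fun _ => inhab M) phi.

(* a condition is a finite set {phi_1 < r_1, ..., phi_n < r_n}, as a list of pairs *)
Definition cond R (L : signature R) := seq (formula L * R).

Definition is_condition R (L : signature R) (Mcl : set (structure L))
    (S : set (formula L)) (p : cond L) :=
  (forall e, List.In e p -> SigmaC S e.1 /\ sentence e.1) /\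
  exists (M : structure L) (C0 : seq nat) (a : nat -> M),
    [/\ Mcl M,
        forall e c, List.In e p -> fconst e.1 c -> c \in C0 &
        forall e, List.In e p -> sval a e.1 < e.2].

Definition cle R (L : signature R) (q p : cond L) := forall e, List.In e p -> List.In e q.

Definition below R (L : signature R) (Mcl : set (structure L)) (S : set (formula L))
    (p : cond L) : set (cond L) :=
  [set q | is_condition Mcl S q /\ cle q p].

Definition H R (L : signature R) (p : cond L) (phi : formula L) : R :=
  if pselect (exists r, r <= 1 /\ List.In (phi, r) p)
  then inf [set r | r <= 1 /\ List.In (phi, r) p]   (* a finite set: inf = min *)
  else 1.

Definition Hw R (L : signature R) (Mcl : set (structure L)) (S : set (formula L))
    (p : cond L) (phi : formula L) : R :=
  sup [set inf [set H q' phi | q' in below Mcl S q] | q in below Mcl S p].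

From Pilot Require Import Defs.
From HB Require Import structures.
From mathcomp Require Import all_boot all_order all_algebra.
From mathcomp Require Import boolp classical_sets reals.
From mathcomp Require Import lra.
From Stdlib Require List.
(* Re-imported so that [sval] and [predI] denote the Defs versions, not the ssreflect ones. *)
Import Defs.
Import Order.TTheory GRing.Theory Num.Theory.
Local Open Scope classical_set_scope.
Local Open Scope ring_scope.
Set Implicit Arguments. Unset Strict Implicit. Unset Printing Implicit Defensive.

(* Write [Hinf q th] for inf_{q' <= q} H_{q'}(th), so that H^w_p(th) = sup_{q <= p} Hinf q th.
   Since H_{q'}(th) bounds the value of [th] in every model of [q'] from above, and since [q] can
   always be extended by [th < th^(M,a) + e] without losing the model (M, a), [Hinf q th] is the
   infimum of the values of [th] in the models of [q].  With this description each clause is an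
   e-argument on models: negation by forcing [~ phi] small, [+] by forcing both summands small,
   conjunctions by forcing a single conjunct, and [inf_x] by forcing an instance phi(c) in which a
   fresh constant [c] names a near-optimal witness.  Taking suprema over [q <= p] gives the
   stated identities for H^w_p. *)

Section SupInfImage.
Variables (R : realType) (T : Type) (A : set T) (f : T -> R).

Lemma ge_sup_image b : A !=set0 -> (forall x, A x -> f x <= b) -> sup (f @` A) <= b.
Proof. by move=> [x Ax] fb; apply: ge_sup; [exists (f x), x|move=> _ [y Ay <-]; exact: fb]. Qed.

Lemma le_sup_image B x : (forall y, A y -> f y <= B) -> A x -> f x <= sup (f @` A).
Proof. by move=> fB Ax; apply: ub_le_sup; [exists B => _ [y Ay <-]; exact: fB|exists x]. Qed.

Lemma ge_inf_image B x : (forall y, A y -> B <= f y) -> A x -> inf (f @` A) <= f x.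
Proof. by move=> Bf Ax; apply: ge_inf; [exists B => _ [y Ay <-]; exact: Bf|exists x]. Qed.

Lemma le_inf_image b : A !=set0 -> (forall x, A x -> b <= f x) -> b <= inf (f @` A).
Proof. by move=> [x Ax] bf; apply: lb_le_inf; [exists (f x), x|move=> _ [y Ay <-]; exact: bf]. Qed.

End SupInfImage.

Lemma inf_range_le (R : realType) (T : Type) (f : T -> R) t :
  (forall t, 0 <= f t) -> inf (range f) <= f t.
Proof. by move=> f0; apply: ge_inf_image (fun t _ => f0 t) (I : setT t). Qed.

Lemma inf_range_unit (R : realType) (T : Type) (t0 : T) (f : T -> R) :
  (forall t, 0 <= f t <= 1) -> 0 <= inf (range f) <= 1.
Proof.
move=> f01; have f0 t : 0 <= f t by case/andP: (f01 t).
apply/andP; split; first by apply: le_inf_image => //; exists t0.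
by apply: le_trans (inf_range_le t0 f0) _; case/andP: (f01 t0).
Qed.

Section Syntax.
Variables (R : realType) (L : signature R).

Definition substs (s : seq (nat * nat)) (phi : formula L) : formula L :=
  foldr (fun xc p => fsubst xc.1 xc.2 p) phi s.

Lemma substs_cons x c s phi : substs ((x, c) :: s) phi = fsubst x c (substs s phi).
Proof. by []. Qed.

Lemma tconst_tsubst x c d (t : term L) : tconst (tsubst x c t) d -> tconst t d \/ d = c.
Proof.
elim: t => [n|n|f ts IH] /=; first by case: eqP => _ /=; [right|].
- by left.
- by case=> i /IH [h|h]; [left; exists i|right].
Qed.

Lemma fconst_fsubst x c d (phi : formula L) : fconst (fsubst x c phi) d -> fconst phi d \/ d = c.
Proof.
elim: phi => [t1 t2|P ts|p IH|p IH|p IHp q IHq|Ph IH|y p IH] /=.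
- by case=> /tconst_tsubst [h|h]; auto.
- by case=> i /tconst_tsubst [h|h]; [left; exists i|right].
- exact: IH.
- exact: IH.
- by case=> [/IHp|/IHq] [h|h]; auto.
- by case=> n /IH [h|h]; [left; exists n|right].
- by case: eqP => _ /=; [left|move/IH].
Qed.

Lemma tfv_tsubst x c (t : term L) y : tfv (tsubst x c t) y -> tfv t y /\ y <> x.
Proof.
elim: t => [n|n|f ts IH] //=; first by case: eqP => //= nx ny; subst.
by case=> i /IH [h1 h2]; split=> //; exists i.
Qed.

Lemma ffv_fsubst x c (phi : formula L) y : ffv (fsubst x c phi) y -> ffv phi y /\ y <> x.
Proof.
elim: phi => [t1 t2|P ts|p IH|p IH|p IHp q IHq|Ph IH|z p IH] /=.
- by case=> /tfv_tsubst [h1 h2]; split=> //; [left|right].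
- by case=> i /tfv_tsubst [h1 h2]; split=> //; exists i.
- exact: IH.
- exact: IH.
- by case=> [/IHp|/IHq] [h1 h2]; split=> //; [left|right].
- by case=> n /IH [h1 h2]; split=> //; exists n.
- case: eqP => [->|_] /= [yz h]; first by split.
  by case: (IH h) => h1 h2; split.
Qed.

Lemma sentence_fsubst x c (phi : formula L) : sentence (FInf x phi) -> sentence (fsubst x c phi).
Proof. by move=> hs y /ffv_fsubst [h1 h2]; apply: (hs y). Qed.

Lemma imm_sub_fsubst x c (psi phi : formula L) : imm_sub psi (fsubst x c phi) ->
  exists2 psi1, imm_sub psi1 phi & psi = fsubst x c psi1 \/ psi = psi1.
Proof.
case: phi => [t1 t2|P ts|p|p|p q|Ph|y p] //= .
- by move=> ->; exists p; [|left].
- by move=> ->; exists p; [|left].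
- by case=> ->; [exists p; [left|left]|exists q; [right|left]].
- by case=> n ->; exists (Ph n); [exists n|left].
- by case: eqP => _ /= ->; exists p => //; [right|left].
Qed.

Lemma imm_sub_substs s (psi phi : formula L) : imm_sub psi (substs s phi) ->
  exists s' psi0, imm_sub psi0 phi /\ psi = substs s' psi0.
Proof.
elim: s psi => [|[x c] s IH] psi; first by exists [::], psi.
rewrite substs_cons => /imm_sub_fsubst [psi1 /IH [s' [psi0 [sub0 ->]]] [->|->]].
- by exists ((x, c) :: s'), psi0.
- by exists s', psi0.
Qed.

Section SigmaC.
Variable S : set (formula L).

Lemma SigmaC_fsubst x c psi : SigmaC S psi -> SigmaC S (fsubst x c psi).
Proof. by case=> phi [s [Sphi ->]]; exists phi, ((x, c) :: s). Qed.

Lemma SigmaC_imm_sub psi theta :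
  subformula_closed S -> SigmaC S theta -> imm_sub psi theta -> SigmaC S psi.
Proof.
move=> Sclosed [phi [s [Sphi ->]]] /(@imm_sub_substs s) [s' [psi0 [sub0 ->]]].
by exists psi0, s'; split=> //; apply: Sclosed sub0.
Qed.

Lemma SigmaC_fconst_finite theta : (forall phi, S phi -> forall c, ~ fconst phi c) ->
  SigmaC S theta -> exists cs : seq nat, forall c, fconst theta c -> c \in cs.
Proof.
move=> S_Cfree [phi [s [Sphi ->]]]; exists (map snd s).
elim: s => [|[x c] s IH] d /=; first by move/(S_Cfree _ Sphi).
by rewrite in_cons => /fconst_fsubst [/IH ->|->]; rewrite ?eqxx ?orbT.
Qed.

End SigmaC.
End Syntax.

Section Semantics.
Variables (R : realType) (L : signature R) (M : structure L).

Lemma feval_unit (a env : nat -> M) (phi : formula L) : 0 <= feval a env phi <= 1.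
Proof.
elim: phi env => [t1 t2|P ts|p IH|p IH|p IHp q IHq|Ph IH|z p IH] env /=.
- exact: dist_range.
- exact: pred_range.
- by have /andP[] := IH env; move=> *; apply/andP; split; lra.
- by have /andP[] := IH env; move=> *; apply/andP; split; lra.
- have /andP[? ?] := IHp env; have /andP[? ?] := IHq env.
  by rewrite le_min ge_min lexx orbT andbT; apply/andP; split; lra.
- exact: inf_range_unit 0%N _ (fun n => IH n env).
- exact: inf_range_unit (inhab M) _ (fun m => IH (upd env z m)).
Qed.

Lemma teval_eq_const (a a' env : nat -> M) (t : term L) :
  (forall d, tconst t d -> a d = a' d) -> teval a env t = teval a' env t.
Proof.
elim: t => [n|n|f ts IH] /= aa' //; first exact: aa'.
by congr (funI M f _); apply/funext => i; apply: IH => d hd; apply: aa'; exists i.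
Qed.

Lemma feval_eq_const (a a' : nat -> M) (phi : formula L) :
  (forall d, fconst phi d -> a d = a' d) -> forall env, feval a env phi = feval a' env phi.
Proof.
elim: phi => [t1 t2|P ts|p IH|p IH|p IHp q IHq|Ph IH|z p IH] /= aa' env.
- by congr (dist M _ _); apply: teval_eq_const => d hd; apply: aa'; auto.
- by congr (predI M P _); apply/funext => i; apply: teval_eq_const => d hd; apply: aa'; exists i.
- by rewrite IH.
- by rewrite IH.
- by rewrite IHp ?IHq // => d hd; apply: aa'; auto.
- by do 2 f_equal; apply/funext => n; apply: IH => d hd; apply: aa'; exists n.
- by do 2 f_equal; apply/funext => m; exact: IH.
Qed.

Lemma upd_upd (T : Type) (env : nat -> T) x m m' : upd (upd env x m') x m = upd env x m.
Proof. by apply/funext => y; rewrite /upd; case: eqP. Qed.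

Lemma upd_comm (T : Type) (env : nat -> T) x y m m' : x != y ->
  upd (upd env x m') y m = upd (upd env y m) x m'.
Proof.
move=> xy; apply/funext => z; rewrite /upd.
by have [->|//] := eqVneq z y; rewrite eq_sym (negbTE xy).
Qed.

Lemma teval_tsubst (a env : nat -> M) x c (t : term L) :
  teval a env (tsubst x c t) = teval a (upd env x (a c)) t.
Proof.
elim: t => [n|n|f ts IH] //=; first by rewrite /upd; case: eqP.
by congr (funI M f _); apply/funext => i; apply: IH.
Qed.

Lemma feval_fsubst (a : nat -> M) x c (phi : formula L) env :
  feval a env (fsubst x c phi) = feval a (upd env x (a c)) phi.
Proof.
elim: phi env => [t1 t2|P ts|p IH|p IH|p IHp q IHq|Ph IH|z p IH] env /=.
- by rewrite !teval_tsubst.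
- by congr (predI M P _); apply/funext => i; rewrite teval_tsubst.
- by rewrite IH.
- by rewrite IH.
- by rewrite IHp IHq.
- by do 2 f_equal; apply/funext => n; rewrite IH.
- case: eqP => [->|/eqP zx] /=; do 2 f_equal; apply/funext => m.
    by rewrite upd_upd.
  by rewrite IH upd_comm // eq_sym.
Qed.

Lemma sval_unit (a : nat -> M) phi : 0 <= sval a phi <= 1.
Proof. exact: feval_unit. Qed.

Lemma sval_FNeg (a : nat -> M) phi : sval a (FNeg phi) = 1 - sval a phi.
Proof. by []. Qed.

Lemma sval_FHalf (a : nat -> M) phi : sval a (FHalf phi) = sval a phi / 2.
Proof. by []. Qed.

Lemma sval_FPlus (a : nat -> M) phi psi :
  sval a (FPlus phi psi) = Num.min (sval a phi + sval a psi) 1.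
Proof. by []. Qed.

Lemma sval_FAnd (a : nat -> M) Phi : sval a (FAnd Phi) = inf (range (fun n => sval a (Phi n))).
Proof. by []. Qed.

Lemma sval_FInf (a : nat -> M) x phi :
  sval a (FInf x phi) = inf (range (fun m => feval a (upd (fun _ => inhab M) x m) phi)).
Proof. by []. Qed.

Lemma sval_fsubst (a : nat -> M) x c phi :
  sval a (fsubst x c phi) = feval a (upd (fun _ => inhab M) x (a c)) phi.
Proof. exact: feval_fsubst. Qed.

End Semantics.

Lemma exists_notin_nat (cs : seq nat) : exists c, c \notin cs.
Proof.
exists (sumn cs).+1; apply/negP.
suff : forall c, c \in cs -> (c <= sumn cs)%N by move/[apply]; rewrite ltnn.
elim: cs => [|d cs IH] c //=; rewrite in_cons => /orP[/eqP ->|/IH]; first exact: leq_addr.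
by move/leq_trans; apply; exact: leq_addl.
Qed.

Section ConditionValues.
Variables (R : realType) (L : signature R).

Lemma entries_lbound (p : cond L) : exists m : R, forall e, List.In e p -> m <= e.2.
Proof.
elim: p => [|e p [m hm]]; first by exists 0.
exists (Num.min e.2 m) => e' /= [<-|/hm h]; first by rewrite ge_min lexx.
by rewrite ge_min h orbT.
Qed.

Lemma H_le_entry (r : cond L) th s : List.In (th, s) r -> H r th <= s.
Proof.
rewrite /H; case: pselect => [[s0 [s01 in0]]|nex] ins; last first.
  by have [s1|/ltW//] := leP s 1; case: nex; exists s.
set E := [set s1 | s1 <= 1 /\ List.In (th, s1) r].
have [m hm] := entries_lbound r.
have inf_le s1 : E s1 -> inf E <= s1 by apply: ge_inf; exists m => s2 [_ /hm].
have [s1|s1] := leP s 1; first exact: inf_le.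
by apply: le_trans (inf_le _ (conj s01 in0)) _; apply: le_trans s01 (ltW s1).
Qed.

Lemma H_le1 (r : cond L) th : H r th <= 1.
Proof.
have [[s [s1 ins]]|nex] := pselect (exists s, s <= 1 /\ List.In (th, s) r).
  exact: le_trans (H_le_entry ins) s1.
by rewrite /H; case: pselect.
Qed.

Lemma le_H (r : cond L) th b :
  b <= 1 -> (forall s, List.In (th, s) r -> b <= s) -> b <= H r th.
Proof.
move=> b1 bs; rewrite /H; case: pselect => // -[s0 [s01 in0]].
by apply: lb_le_inf; [exists s0|move=> s [_ /bs]].
Qed.

End ConditionValues.

Section Forcing.
Variables (R : realType) (L : signature R) (Mcl : set (structure L)) (S : set (formula L)).
Hypothesis S_Cfree : forall phi, S phi -> forall c, ~ fconst phi c.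

Local Notation "q <=c p" := (below Mcl S p q) (at level 70).
Local Notation condition := (is_condition Mcl S).
Local Notation Hw := (Hw Mcl S).

Definition models (q : cond L) (M : structure L) (a : nat -> M) :=
  exists C0 : seq nat, [/\ Mcl M, forall e c, List.In e q -> fconst e.1 c -> c \in C0 &
                          forall e, List.In e q -> sval a e.1 < e.2].

Lemma condition_models q : condition q -> exists (M : structure L) (a : nat -> M), models q a.
Proof. by case=> _ [M [C0 [a mod_a]]]; exists M, a, C0. Qed.

Lemma models_entry q (M : structure L) (a : nat -> M) th t :
  models q a -> List.In (th, t) q -> sval a th < t.
Proof. by case=> C0 [_ _ lt_a] /lt_a. Qed.

Lemma models_below q q' (M : structure L) (a : nat -> M) : q' <=c q -> models q' a -> models q a.
Proof.
case=> _ q'q [C0 [MM inC0 lt_a]]; exists C0.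
by split=> // [e c /q'q|e /q'q]; [exact: inC0|exact: lt_a].
Qed.

Lemma models_fresh q (M : structure L) (a : nat -> M) (cs : seq nat) :
  models q a -> exists2 c, c \notin cs & forall m, models q (fun d => if d == c then m else a d).
Proof.
case=> C0 [MM inC0 lt_a]; have [c c_fresh] := exists_notin_nat (cs ++ C0).
exists c => [|m]; first by apply: contra c_fresh; rewrite mem_cat => ->.
exists C0; split=> // e in_e; have <- : sval a e.1 = sval (fun d => if d == c then m else a d) e.1.
  apply: feval_eq_const => d /(inC0 _ _ in_e) d_C0; case: eqP => // dc.
  by move: c_fresh; rewrite mem_cat -dc d_C0 orbT.
exact: lt_a.
Qed.

Lemma sval_le_H q (M : structure L) (a : nat -> M) th : models q a -> sval a th <= H q th.
Proof.
move=> mod_a; apply: le_H => [|s /(models_entry mod_a) /ltW //].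
by case/andP: (sval_unit a th).
Qed.

Lemma models_extend q (M : structure L) (a : nat -> M) th t :
  condition q -> models q a -> SigmaC S th -> sentence th -> sval a th < t ->
  (th, t) :: q <=c q /\ models ((th, t) :: q) a.
Proof.
move=> [q_Sigma _] [C0 [MM inC0 lt_a]] th_Sigma th_sent th_lt.
have [cs th_cs] := SigmaC_fconst_finite S_Cfree th_Sigma.
have mod_a : models ((th, t) :: q) a.
  exists (C0 ++ cs); split=> // [e c /= [<- /th_cs|/inC0 in_e /in_e]|e /= [<-|/lt_a]] //;
    by rewrite mem_cat => ->; rewrite ?orbT.
split=> //; split; last by move=> e; right.
by split; [move=> e /= [<-|/q_Sigma]|case: mod_a => C1 mod_C1; exists M, C1, a].
Qed.

Lemma below_refl q : condition q -> q <=c q.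
Proof. by split. Qed.

Lemma below_trans q r r' : r <=c q -> r' <=c r -> r' <=c q.
Proof. by case=> _ rq [r'_cond r'r]; split=> // e /rq /r'r. Qed.

Lemma below_condition q r : r <=c q -> condition r.
Proof. by case. Qed.

Lemma H_ge0 q th : condition q -> 0 <= H q th.
Proof.
case/condition_models => M [a mod_a]; apply: le_trans (sval_le_H th mod_a).
by case/andP: (sval_unit a th).
Qed.

Definition Hinf (q : cond L) (th : formula L) : R := inf [set H q' th | q' in below Mcl S q].

Lemma Hinf_le_H q r th : r <=c q -> Hinf q th <= H r th.
Proof. by apply: ge_inf_image => r' /below_condition; exact: H_ge0. Qed.

Lemma Hinf_le1 q th : condition q -> Hinf q th <= 1.
Proof. by move=> q_cond; apply: le_trans (Hinf_le_H th (below_refl q_cond)) (H_le1 _ _). Qed.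

Lemma Hinf_antitone q q' th : q' <=c q -> Hinf q th <= Hinf q' th.
Proof.
move=> q'q; apply: le_inf_image; first by exists q'; exact: below_refl (below_condition q'q).
by move=> r rq'; exact: Hinf_le_H (below_trans q'q rq').
Qed.

Lemma Hinf_le_sval q (M : structure L) (a : nat -> M) th :
  condition q -> models q a -> SigmaC S th -> sentence th -> Hinf q th <= sval a th.
Proof.
move=> q_cond mod_a th_Sigma th_sent; apply/ler_addgt0Pr => e e_gt0.
have th_lt : sval a th < sval a th + e by rewrite ltrDl.
have [r_q _] := models_extend q_cond mod_a th_Sigma th_sent th_lt.
by apply: le_trans (Hinf_le_H th r_q) _; apply: H_le_entry; left.
Qed.

Lemma le_Hinf q th b :
  condition q -> (forall (M : structure L) (a : nat -> M), models q a -> b <= sval a th) ->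
  b <= Hinf q th.
Proof.
move=> q_cond b_le; apply: le_inf_image; first by exists q; exact: below_refl.
move=> r rq; have [M [a mod_a]] := condition_models (below_condition rq).
have b_le_a := b_le M a (models_below rq mod_a).
apply: le_H => [|s /(models_entry mod_a) /ltW]; last exact: le_trans.
by apply: le_trans b_le_a _; case/andP: (sval_unit a th).
Qed.

Lemma Hinf_ge0 q th : condition q -> 0 <= Hinf q th.
Proof. by move=> q_cond; apply: le_Hinf => // M a _; case/andP: (sval_unit a th). Qed.

Lemma Hinf_le_Hw p q th : q <=c p -> Hinf q th <= Hw p th.
Proof. by apply: le_sup_image => q' /below_condition; exact: Hinf_le1. Qed.

Lemma Hw_le p th b : condition p -> (forall q, q <=c p -> Hinf q th <= b) -> Hw p th <= b.
Proof. by move=> p_cond; apply: ge_sup_image; exists p; exact: below_refl. Qed.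

Lemma Hinf_le_Hw_refl q th : condition q -> Hinf q th <= Hw q th.
Proof. by move=> q_cond; exact: Hinf_le_Hw (below_refl q_cond). Qed.

Lemma Hw_ge0 q th : condition q -> 0 <= Hw q th.
Proof. by move=> q_cond; apply: le_trans (Hinf_ge0 th q_cond) (Hinf_le_Hw_refl th q_cond). Qed.

Lemma Hw_le1 q th : condition q -> Hw q th <= 1.
Proof. by move=> q_cond; apply: Hw_le => // r /below_condition; exact: Hinf_le1. Qed.

Lemma Hw_antitone p q th : q <=c p -> Hw q th <= Hw p th.
Proof.
move=> qp; apply: Hw_le; first exact: below_condition qp.
by move=> r rq; exact: Hinf_le_Hw (below_trans qp rq).
Qed.

Lemma Hw_le_entry r th t : condition r -> List.In (th, t) r -> Hw r th <= t.
Proof.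
move=> r_cond in_r; apply: Hw_le => // q [q_cond /(_ _ in_r) in_q].
exact: le_trans (Hinf_le_H th (below_refl q_cond)) (H_le_entry in_q).
Qed.

Lemma Hw_le_sval p th b :
  condition p -> SigmaC S th -> sentence th ->
  (forall (M : structure L) (a : nat -> M), models p a -> sval a th <= b) -> Hw p th <= b.
Proof.
move=> p_cond th_Sigma th_sent le_b; apply: Hw_le => // q qp.
have [M [a mod_a]] := condition_models (below_condition qp).
apply: le_trans (Hinf_le_sval (below_condition qp) mod_a th_Sigma th_sent) _.
exact: le_b (models_below qp mod_a).
Qed.

Lemma le_sval_of_Hw q (M : structure L) (a : nat -> M) th b :
  condition q -> models q a -> SigmaC S th -> sentence th ->
  (forall r, r <=c q -> b <= Hw r th) -> b <= sval a th.
Proof.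
move=> q_cond mod_a th_Sigma th_sent b_le; apply/ler_addgt0Pr => e e_gt0.
have th_lt : sval a th < sval a th + e by rewrite ltrDl.
have [r_q _] := models_extend q_cond mod_a th_Sigma th_sent th_lt.
by apply: le_trans (b_le _ r_q) _; apply: Hw_le_entry (below_condition r_q) _; left.
Qed.

Lemma Hw_sup_Hw p th : condition p -> Hw p th = sup [set Hw q th | q in below Mcl S p].
Proof.
move=> p_cond; apply/eqP; rewrite eq_le; apply/andP; split.
- apply: Hw_le => // q qp; apply: le_trans (Hinf_le_Hw_refl th (below_condition qp)) _.
  by apply: le_sup_image qp => r /below_condition; exact: Hw_le1.
- by apply: ge_sup_image; [exists p; exact: below_refl|move=> q; exact: Hw_antitone].
Qed.

Lemma Hw_sup_inf_Hw p th : condition p ->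
  Hw p th = sup [set inf [set Hw q' th | q' in below Mcl S q] | q in below Mcl S p].
Proof.
move=> p_cond.
have inf_le_Hw q : condition q -> inf [set Hw q' th | q' in below Mcl S q] <= Hw q th.
  by move=> q_cond; apply: ge_inf_image (below_refl q_cond) => r /below_condition; exact: Hw_ge0.
apply/eqP; rewrite eq_le; apply/andP; split.
- apply: Hw_le => // q qp; apply: le_trans _ (le_sup_image _ qp); last first.
    by move=> r /below_condition r_cond; apply: le_trans (inf_le_Hw _ r_cond) (Hw_le1 _ r_cond).
  apply: le_inf_image; first by exists q; exact: below_refl (below_condition qp).
  by move=> r rq; apply: le_trans (Hinf_antitone th rq) (Hinf_le_Hw_refl _ (below_condition rq)).
- apply: ge_sup_image; first by exists p; exact: below_refl.
  by move=> q qp; apply: le_trans (inf_le_Hw _ (below_condition qp)) (Hw_antitone _ qp).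
Qed.

Lemma HwE p th : Hw p th = sup [set Hinf q th | q in below Mcl S p].
Proof. by []. Qed.

Hypothesis S_closed : subformula_closed S.

(* Forcing [~ phi < 1 - sval a phi + e] keeps the model [a] and makes [phi] at least
   [sval a phi - e] in every model below. *)
Lemma sval_le_Hw q (M : structure L) (a : nat -> M) phi :
  condition q -> models q a -> SigmaC S (FNeg phi) -> sentence (FNeg phi) ->
  sval a phi <= Hw q phi.
Proof.
move=> q_cond mod_a nphi_Sigma nphi_sent; apply/ler_addgt0Pr => e e_gt0.
pose r := (FNeg phi, 1 - sval a phi + e) :: q.
have nphi_lt : sval a (FNeg phi) < 1 - sval a phi + e by rewrite sval_FNeg; lra.
have [r_q _] : r <=c q /\ _ := models_extend q_cond mod_a nphi_Sigma nphi_sent nphi_lt.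
suff : sval a phi - e <= Hinf r phi by have := Hinf_le_Hw phi r_q; lra.
apply: le_Hinf (below_condition r_q) _ => M' b mod_b.
by have := models_entry mod_b (or_introl erefl); rewrite sval_FNeg; lra.
Qed.

Lemma Hinf_FNeg q phi : condition q -> SigmaC S (FNeg phi) -> sentence (FNeg phi) ->
  Hinf q (FNeg phi) = 1 - Hw q phi.
Proof.
move=> q_cond nphi_Sigma nphi_sent.
have phi_Sigma : SigmaC S phi := SigmaC_imm_sub S_closed nphi_Sigma erefl.
apply/eqP; rewrite eq_le; apply/andP; split.
- suff : Hw q phi <= 1 - Hinf q (FNeg phi) by lra.
  apply: Hw_le_sval => // M a mod_a.
  by have := Hinf_le_sval q_cond mod_a nphi_Sigma nphi_sent; rewrite sval_FNeg; lra.
- apply: le_Hinf => // M a mod_a; rewrite sval_FNeg.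
  by have := sval_le_Hw q_cond mod_a nphi_Sigma nphi_sent; lra.
Qed.

Lemma Hw_FNeg p phi : condition p -> SigmaC S (FNeg phi) -> sentence (FNeg phi) ->
  Hw p (FNeg phi) = 1 - inf [set Hw q phi | q in below Mcl S p].
Proof.
move=> p_cond nphi_Sigma nphi_sent; set I := inf [set Hw q phi | q in below Mcl S p].
have I_le q : q <=c p -> I <= Hw q phi.
  by apply: ge_inf_image => r /below_condition; exact: Hw_ge0.
apply/eqP; rewrite eq_le; apply/andP; split.
- apply: Hw_le => // q qp; rewrite (Hinf_FNeg (below_condition qp)) //.
  by have := I_le q qp; lra.
- suff : 1 - Hw p (FNeg phi) <= I by lra.
  apply: le_inf_image; first by exists p; exact: below_refl.
  move=> q qp; have := Hinf_le_Hw (FNeg phi) qp.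
  by rewrite (Hinf_FNeg (below_condition qp)) //; lra.
Qed.

Lemma Hinf_FHalf q phi : condition q -> SigmaC S (FHalf phi) -> sentence (FHalf phi) ->
  Hinf q (FHalf phi) = Hinf q phi / 2.
Proof.
move=> q_cond hphi_Sigma hphi_sent.
have phi_Sigma : SigmaC S phi := SigmaC_imm_sub S_closed hphi_Sigma erefl.
have phi_sent : sentence phi := hphi_sent.
apply/eqP; rewrite eq_le; apply/andP; split.
- suff : 2 * Hinf q (FHalf phi) <= Hinf q phi by lra.
  apply: le_Hinf => // M a mod_a.
  by have := Hinf_le_sval q_cond mod_a hphi_Sigma hphi_sent; rewrite sval_FHalf; lra.
- apply: le_Hinf => // M a mod_a; rewrite sval_FHalf.
  by have := Hinf_le_sval q_cond mod_a phi_Sigma phi_sent; lra.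
Qed.

Lemma Hw_FHalf p phi : condition p -> SigmaC S (FHalf phi) -> sentence (FHalf phi) ->
  Hw p (FHalf phi) = Hw p phi / 2.
Proof.
move=> p_cond hphi_Sigma hphi_sent; apply/eqP; rewrite eq_le; apply/andP; split.
- apply: Hw_le => // q qp; rewrite (Hinf_FHalf (below_condition qp)) //.
  by have := Hinf_le_Hw phi qp; lra.
- suff : Hw p phi <= 2 * Hw p (FHalf phi) by lra.
  apply: Hw_le => // q qp; have := Hinf_le_Hw (FHalf phi) qp.
  by rewrite (Hinf_FHalf (below_condition qp)) //; lra.
Qed.

Lemma Hinf_FPlus_le q phi psi :
  condition q -> SigmaC S (FPlus phi psi) -> sentence (FPlus phi psi) ->
  Hinf q (FPlus phi psi) <= Hw q phi + Hw q psi.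
Proof.
move=> q_cond sum_Sigma sum_sent; set x := Hinf q (FPlus phi psi).
have phi_Sigma : SigmaC S phi := SigmaC_imm_sub S_closed sum_Sigma (or_introl erefl).
have phi_sent : sentence phi := fun y phi_y => sum_sent y (or_introl phi_y).
suff : x - Hw q psi <= Hinf q phi by have := Hinf_le_Hw_refl phi q_cond; lra.
apply: le_Hinf => // M a mod_a; apply/ler_addgt0Pr => e e_gt0.
pose r := (phi, sval a phi + e) :: q.
have phi_lt : sval a phi < sval a phi + e by rewrite ltrDl.
have [r_q _] : r <=c q /\ _ := models_extend q_cond mod_a phi_Sigma phi_sent phi_lt.
suff : x - sval a phi - e <= Hinf r psi by have := Hinf_le_Hw psi r_q; lra.
apply: le_Hinf (below_condition r_q) _ => M' b mod_b.
have := Hinf_le_sval (below_condition r_q) mod_b sum_Sigma sum_sent.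
have := Hinf_antitone (FPlus phi psi) r_q; have := models_entry mod_b (or_introl erefl).
have : Num.min (sval b phi + sval b psi) 1 <= sval b phi + sval b psi by rewrite ge_min lexx.
by rewrite sval_FPlus /x; lra.
Qed.

Lemma Hinf_FPlus q phi psi :
  condition q -> SigmaC S (FPlus phi psi) -> sentence (FPlus phi psi) ->
  Hinf q (FPlus phi psi) =
    inf [set Num.min (Hw q' phi + Hw q' psi) 1 | q' in below Mcl S q].
Proof.
move=> q_cond sum_Sigma sum_sent.
have phi_Sigma : SigmaC S phi := SigmaC_imm_sub S_closed sum_Sigma (or_introl erefl).
have psi_Sigma : SigmaC S psi := SigmaC_imm_sub S_closed sum_Sigma (or_intror erefl).
have phi_sent : sentence phi := fun y phi_y => sum_sent y (or_introl phi_y).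
have psi_sent : sentence psi := fun y psi_y => sum_sent y (or_intror psi_y).
set I := inf _.
have min_ge0 q' : q' <=c q -> 0 <= Num.min (Hw q' phi + Hw q' psi) 1.
  move=> /below_condition q'_cond; rewrite le_min ler01 andbT.
  by apply: addr_ge0; exact: Hw_ge0.
have I_le q' : q' <=c q -> I <= Num.min (Hw q' phi + Hw q' psi) 1 := ge_inf_image min_ge0.
apply/eqP; rewrite eq_le; apply/andP; split.
- apply: le_inf_image; first by exists q; exact: below_refl.
  move=> q' q'q; have q'_cond := below_condition q'q.
  apply: le_trans (Hinf_antitone _ q'q) _.
  by rewrite le_min Hinf_FPlus_le // Hinf_le1.
- apply: le_Hinf => // M a mod_a; rewrite sval_FPlus le_min; apply/andP; split; last first.
    by have := I_le q (below_refl q_cond); rewrite le_min => /andP[].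
  apply/ler_addgt0Pr => e e_gt0.
  have phi_lt : sval a phi < sval a phi + e / 2 by lra.
  have psi_lt : sval a psi < sval a psi + e / 2 by lra.
  have [r1_q mod_r1] := models_extend q_cond mod_a phi_Sigma phi_sent phi_lt.
  have [r2_r1 _] := models_extend (below_condition r1_q) mod_r1 psi_Sigma psi_sent psi_lt.
  have r2_q := below_trans r1_q r2_r1; have r2_cond := below_condition r2_q.
  have := I_le _ r2_q; rewrite le_min => /andP[I_le_sum _].
  have := Hw_le_entry r2_cond (or_intror (or_introl erefl)).
  by have := Hw_le_entry r2_cond (or_introl erefl); lra.
Qed.

(* The last hypothesis: the value of [Th] in a model of [q] is the greatest common lower bound of
   the values of the [th t] in the models of [q] on the same structure (for [FInf] this needs fresh
   constants). *)
Lemma Hinf_family (T : Type) (t0 : T) q (Th : formula L) (th : T -> formula L) :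
  condition q -> SigmaC S Th -> sentence Th ->
  (forall t, SigmaC S (th t)) -> (forall t, sentence (th t)) ->
  (forall (M : structure L) (a : nat -> M) t, sval a Th <= sval a (th t)) ->
  (forall (M : structure L) (a : nat -> M) b, models q a ->
     (forall (a' : nat -> M) t, models q a' -> b <= sval a' (th t)) -> b <= sval a Th) ->
  Hinf q Th = inf [set inf (range (fun t => Hw q' (th t))) | q' in below Mcl S q].
Proof.
move=> q_cond Th_Sigma Th_sent th_Sigma th_sent Th_le Th_glb; set I := inf _.
have K_ge0 q' : q' <=c q -> 0 <= inf (range (fun t => Hw q' (th t))).
  by move=> /below_condition q'_cond; apply: le_inf_image => [|t _]; [exists t0|exact: Hw_ge0].
apply/eqP; rewrite eq_le; apply/andP; split.
- apply: le_inf_image; first by exists q; exact: below_refl.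
  move=> q' q'q; have q'_cond := below_condition q'q.
  apply: le_trans (Hinf_antitone _ q'q) _.
  apply: le_inf_image => [|t _]; first by exists t0.
  apply: le_trans (Hinf_le_Hw_refl _ q'_cond); apply: le_Hinf => // M a mod_a.
  exact: le_trans (Hinf_le_sval q'_cond mod_a Th_Sigma Th_sent) (Th_le M a t).
- apply: le_Hinf => // M a mod_a; apply: Th_glb mod_a _ => a' t mod_a'.
  apply: le_sval_of_Hw q_cond mod_a' (th_Sigma t) (th_sent t) _ => r rq.
  apply: le_trans (ge_inf_image K_ge0 rq) _.
  by apply: inf_range_le => t'; exact: Hw_ge0 (below_condition rq).
Qed.

Lemma Hinf_FAnd q Phi : condition q -> SigmaC S (FAnd Phi) -> sentence (FAnd Phi) ->
  Hinf q (FAnd Phi) = inf [set inf (range (fun n => Hw q' (Phi n))) | q' in below Mcl S q].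
Proof.
move=> q_cond and_Sigma and_sent.
apply: (Hinf_family 0%N) => //.
- by move=> n; apply: SigmaC_imm_sub S_closed and_Sigma _; exists n.
- by move=> n y Phin_y; apply: and_sent (ex_intro _ n Phin_y).
- move=> M a n; rewrite sval_FAnd; apply: inf_range_le => k.
  by case/andP: (sval_unit a (Phi k)).
- move=> M a b mod_a b_le; rewrite sval_FAnd.
  by apply: le_inf_image => [|n _]; [exists 0%N|exact: b_le mod_a].
Qed.

Lemma Hinf_FInf q x phi : condition q -> SigmaC S (FInf x phi) -> sentence (FInf x phi) ->
  Hinf q (FInf x phi) =
    inf [set inf (range (fun c => Hw q' (fsubst x c phi))) | q' in below Mcl S q].
Proof.
move=> q_cond inf_Sigma inf_sent.
have phi_Sigma : SigmaC S phi := SigmaC_imm_sub S_closed inf_Sigma erefl.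
apply: (Hinf_family 0%N) => //.
- by move=> c; exact: SigmaC_fsubst.
- by move=> c; exact: sentence_fsubst.
- move=> M a c; rewrite sval_FInf sval_fsubst; apply: inf_range_le => m.
  by case/andP: (feval_unit a (upd (fun _ => inhab M) x m) phi).
- move=> M a b mod_a b_le.
  have [cs phi_cs] := SigmaC_fconst_finite S_Cfree inf_Sigma.
  (* Interpreting a fresh constant [c] by [m] changes neither [q] nor [phi]. *)
  have [c c_fresh mod_ac] := models_fresh cs mod_a.
  rewrite sval_FInf; apply: le_inf_image => [|m _]; first by exists (inhab M).
  apply: le_trans (b_le _ c (mod_ac m)) _; rewrite sval_fsubst eqxx le_eqVlt; apply/orP; left.
  apply/eqP/feval_eq_const => d phi_d; case: eqP => // dc.
  by move: c_fresh; rewrite -dc phi_cs.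
Qed.

End Forcing.

Theorem proposition3p3 (R : realType) (L : signature R)
    (Mcl : set (structure L)) (A S : set (formula L)) :
  is_fragment A -> S `<=` A ->
  (forall phi, atomicL phi -> S phi) -> subformula_closed S ->
  forall p : cond L, is_condition Mcl S p ->
  (forall phi, SigmaC S phi -> sentence phi ->
     Hw Mcl S p phi = sup [set Hw Mcl S q phi | q in below Mcl S p] /\
     Hw Mcl S p phi =
       sup [set inf [set Hw Mcl S q' phi | q' in below Mcl S q] | q in below Mcl S p]) /\
  (forall phi, SigmaC S (FNeg phi) -> sentence (FNeg phi) ->
     Hw Mcl S p (FNeg phi) = 1 - inf [set Hw Mcl S q phi | q in below Mcl S p]) /\
  (forall phi, SigmaC S (FHalf phi) -> sentence (FHalf phi) ->
     Hw Mcl S p (FHalf phi) = Hw Mcl S p phi / 2) /\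
  (forall phi psi, SigmaC S (FPlus phi psi) -> sentence (FPlus phi psi) ->
     Hw Mcl S p (FPlus phi psi) =
       sup [set inf [set Num.min (Hw Mcl S q' phi + Hw Mcl S q' psi) 1
                      | q' in below Mcl S q] | q in below Mcl S p]) /\
  (forall Phi : nat -> formula L, SigmaC S (FAnd Phi) -> sentence (FAnd Phi) ->
     Hw Mcl S p (FAnd Phi) =
       sup [set inf [set inf (range (fun n => Hw Mcl S q' (Phi n)))
                      | q' in below Mcl S q] | q in below Mcl S p]) /\
  (forall (x : nat) (phi : formula L), SigmaC S (FInf x phi) -> sentence (FInf x phi) ->
     Hw Mcl S p (FInf x phi) =
       sup [set inf [set inf (range (fun c : nat => Hw Mcl S q' (fsubst x c phi)))
                      | q' in below Mcl S q] | q in below Mcl S p]).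
Proof.
move=> [_ A_L _ _ _] S_A _ S_closed p p_cond.
have S_Cfree phi : S phi -> forall c, ~ fconst phi c by move=> /S_A /A_L [].
split; first by move=> phi _ _; split; [exact: Hw_sup_Hw|exact: Hw_sup_inf_Hw].
split; first by move=> phi; exact: Hw_FNeg.
split; first by move=> phi; exact: Hw_FHalf.
split; [|split]; [move=> phi psi|move=> Phi|move=> x phi] => th_Sigma th_sent;
  rewrite HwE; congr sup; apply: eq_imagel => q /below_condition q_cond.
- exact: Hinf_FPlus.
- exact: Hinf_FAnd.
- exact: Hinf_FInf.
Qed.
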